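(* Let $X=(X_1,\ldots,X_q)^T$ be a vector of mutually independent Poisson random variables with positive means $\lambda=(\lambda_1,\ldots,\lambda_q)^T$. Let $A \in \{0,1\}^{\ell\times q}$ have pairwise distinct nonzero columns, let $Y=AX$, and let $K_Y(t)=\log E[e^{t^TY}]$. Let $\mathcal B=\{0,1\}^\ell$, $\mathcal B_0=\mathcal B\setminus\{0\}$, with the componentwise order $\le$; let $\mathcal A\subseteq\mathcal B_0$ be the set of columns of $A$ and $\rho(a_{*,j})=\lambda_j$, $\rho(v)=0$ for $v\notin\mathcal A$. For $v\in\mathcal B_0$ with support $\{i_1<\cdots<i_p\}$ let $\phi(v)=\frac{\partial^p}{\partial t_{i_1}\cdots\partial t_{i_p}}K_Y(t)\big|_{t=0}$. For $v\in\mathcal B$, a successor of $v$ is $w\in\mathcal B_0$ with $v<w$ and no $z\in\mathcal B_0$ with $v<z<w$; write $\rightarrow v$ for the set of successors. Run the following algorithm: (1) set $\mathcal Q=(0,\ldots,0)^T$ (a FIFO queue containing the zero vector) and $\mathcal V=\varnothing$; (2) remove the first element $v$ from $\mathcal Q$; (3) for each $w\in\rightarrow v$ with $\phi(w)>0$ that is not already the first component of a pair in $\mathcal V$, append $w$ to $\mathcal Q$ and add $(w,\phi(w))$ to $\mathcal V$; (4) if $\mathcal Q\neq\varnothing$ go to (2), otherwise stop. At termination write $\mathcal V=\{(w_1,\phi(w_1)),\ldots,(w_k,\phi(w_k))\}$, $\mathcal S=(w_1,\ldots,w_k)$, let $M_{\mathcal S}\in\{0,1\}^{k\times k}$ be given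 by $(M_{\mathcal S})_{i,j}=1$ iff $w_i\le w_j$, define $(\psi(w_1),\ldots,\psi(w_k))^T = M_{\mathcal S}^{-1}(\phi(w_1),\ldots,\phi(w_k))^T$, and $\hat{\mathcal A}=\{w_i:\psi(w_i)>0\}$. Then: (1) $\mathcal V=\{(w,\phi(w)) : w\in\mathcal B_0,\ \phi(w)>0\}$; (2) $\hat{\mathcal A}=\mathcal A$ and $\psi(v)=\rho(v)$ for every $v\in\mathcal A$.
   Context: $a_{*,j}$ is the $j$-th column of $A$; $w<v$ means $w\le v$ and $w\ne v$ in the componentwise order. $M_{\mathcal S}$ is invertible since the $w_i$ are distinct. *)

From HB Require Import structures.
From mathcomp Require Import all_boot all_order all_algebra.
From mathcomp Require Import all_classical all_reals all_analysis.

Set Implicit Arguments.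
Unset Strict Implicit.
Unset Printing Implicit Defensive.

Import Order.TTheory GRing.Theory Num.Theory.
Import numFieldNormedType.Exports.

Local Open Scope classical_set_scope.
Local Open Scope ring_scope.

(* Mutual independence of a finite family of (nat-valued) random variables:
   joint probability of any family of measurable events is the product.
   (Taking B j = setT for j outside a subfamily gives the product rule for
   every finite subfamily.) *)
Definition mutually_independent d (T : measurableType d) (R : realType)
  (P : probability T R) (q : nat) (X : 'I_q -> {RV P >-> nat}) : Prop :=
  forall B : 'I_q -> set nat, (forall j, measurable (B j)) ->
    P (\bigcap_j (X j @^-1` B j)) = (\prod_j P (X j @^-1` B j))%E.

Definition is_poisson d (T : measurableType d) (R : realType)
  (P : probability T R) (lam : R) (X : {RV P >-> nat}) : Prop :=
  forall n : nat, P (X @^-1` [set n]) = (poisson_pmf lam n)%:E.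

Notation bvec l := {ffun 'I_l -> bool}.

Definition ble l (v w : bvec l) : bool := [forall i, v i ==> w i].
Definition blt l (v w : bvec l) : bool := ble v w && (v != w).

Definition bzero l : bvec l := [ffun => false].

Definition bcol l q (A : 'M[bool]_(l, q)) (j : 'I_q) : bvec l :=
  [ffun i => A i j].

Definition Yvec d (T : measurableType d) (R : realType) (P : probability T R)
  l q (A : 'M[bool]_(l, q)) (X : 'I_q -> {RV P >-> nat}) (i : 'I_l) (w : T)
  : nat := (\sum_(j < q) (A i j : nat) * X j w)%N.

Definition KY d (T : measurableType d) (R : realType) (P : probability T R)
  l q (A : 'M[bool]_(l, q)) (X : 'I_q -> {RV P >-> nat}) (t : 'rV[R]_l) : R :=
  ln (fine ('E_P[fun w => expR (\sum_(i < l) t 0 i * (Yvec A X i w)%:R)])).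

Definition partial (R : realType) l (i : 'I_l) (f : 'rV[R]_l -> R)
  : 'rV[R]_l -> R := fun t => derive f t (delta_mx 0 i).

Definition phi (R : realType) l (K : 'rV[R]_l -> R) (v : bvec l) : R :=
  (foldr (@partial R l) K (enum [pred i | v i])) 0.

Definition is_succ l (v w : bvec l) : bool :=
  [&& w != bzero l, blt v w &
      ~~ [exists z : bvec l, [&& z != bzero l, blt v z & blt z w]]].

(* The algorithm: state = (queue Q, list V of pairs in insertion order). *)
Definition alg_step (R : realType) l (ph : bvec l -> R)
  (st : seq (bvec l) * seq (bvec l * R)) : seq (bvec l) * seq (bvec l * R) :=
  match st.1 with
  | [::] => st
  | v :: Q =>
      foldl (fun (s : seq (bvec l) * seq (bvec l * R)) (w : bvec l) =>
               if is_succ v w && (0 < ph w) && (w \notin map fst s.2)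
               then (rcons s.1 w, rcons s.2 (w, ph w)) else s)
            (Q, st.2) (enum (bvec l))
  end.

Definition alg_state (R : realType) l (ph : bvec l -> R) (n : nat)
  : seq (bvec l) * seq (bvec l * R) :=
  iter n (alg_step ph) ([:: bzero l], [::]).

Definition MS (R : realType) l (S : seq (bvec l)) : 'M[R]_(size S) :=
  \matrix_(i < size S, j < size S)
    (ble (nth (bzero l) S i) (nth (bzero l) S j))%:R.

Definition psi_vec (R : realType) l (V : seq (bvec l * R)) : 'cV[R]_(size (map fst V)) :=
  invmx (MS R (map fst V)) *m
    \col_(i < size (map fst V)) (nth (bzero l, 0) V i).2.

(* Independence factorises the moment generating function of Y = A X, so that
   K_Y(t) = sum_j lam_j (exp <t, a_j> - 1).  Differentiating once in each
   coordinate of the support of v kills every column a_j that is not above v,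
   hence phi(v) = sum_{j : v <= a_j} lam_j, i.e. phi = zeta * rho on B_0.
   In particular phi is antitone and positive exactly below some column; any
   such w is a successor of w with one bit cleared, which is 0 or again has
   positive phi, so the breadth-first search visits exactly these w.  On the
   visited set, phi = M_S rho, and M_S is unitriangular for an ordering by
   weight, so psi = rho. *)

From HB Require Import structures.
From mathcomp Require Import all_boot all_order all_algebra.
From mathcomp Require Import all_classical all_reals all_analysis.
From mathcomp Require Import ring measurable_realfun.
Import Order.TTheory GRing.Theory Num.Theory.
Import numFieldNormedType.Exports.

Set Implicit Arguments.
Unset Strict Implicit.
Unset Printing Implicit Defensive.

Local Open Scope classical_set_scope.
Local Open Scope ring_scope.

Section BinaryVectors.
Variable l : nat.
Implicit Types u v w : bvec l.

Definition bweight v := #|[pred i | v i]|.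

Lemma ble_refl v : ble v v.
Proof. by apply/forallP => i; apply/implyP. Qed.

Lemma ble_trans u v w : ble u v -> ble v w -> ble u w.
Proof.
move=> /forallP uv /forallP vw; apply/forallP => i; apply/implyP => ui.
by move: (uv i) (vw i); rewrite ui /= => ->.
Qed.

Lemma ble_anti v w : ble v w -> ble w v -> v = w.
Proof.
move=> /forallP vw /forallP wv; apply/ffunP => i.
by move: (vw i) (wv i); case: (v i); case: (w i).
Qed.

Lemma blt_weight v w : blt v w -> (bweight v < bweight w)%N.
Proof.
move=> /andP[/forallP vw vNw]; apply: proper_card; rewrite properE.
apply/andP; split.
  by apply/fintype.subsetP => i; rewrite !inE => vi; move: (vw i); rewrite vi.
apply/negP => /fintype.subsetP wv; move/eqP: vNw; apply; apply: ble_anti.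
  exact/forallP.
by apply/forallP => i; apply/implyP => wi; move: (wv i); rewrite !inE; apply.
Qed.

Lemma bzeroPn v : reflect (exists i, v i) (v != bzero l).
Proof.
apply: (iffP idP) => [v0 | [i vi]].
  apply/existsP; apply: contraNT v0; rewrite negb_exists => /forallP vF.
  by apply/eqP/ffunP => i; rewrite ffunE; apply/negbTE.
by apply/eqP => /ffunP /(_ i); rewrite ffunE vi.
Qed.

Definition bclear w i : bvec l := [ffun k => w k && (k != i)].

Lemma bclear_succ w i : w i -> is_succ (bclear w i) w.
Proof.
move=> wi.
have le_w : ble (bclear w i) w.
  by apply/forallP => k; rewrite ffunE; apply/implyP => /andP[].
have neq_w : bclear w i != w.
  by apply/eqP => /ffunP /(_ i); rewrite ffunE eqxx andbF wi.
have weightS : bweight w = (bweight (bclear w i)).+1.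
  rewrite /bweight (cardD1 i) inE wi add1n; congr _.+1; apply: eq_card => k.
  by rewrite !inE ffunE andbC.
rewrite /is_succ /blt le_w neq_w; apply/and3P; split => //.
  by apply/bzeroPn; exists i.
apply/existsP => -[z /and3P[_ /blt_weight lt1 /blt_weight lt2]].
by move: lt2; rewrite weightS ltnS leqNgt lt1.
Qed.

End BinaryVectors.

Section MixedPartials.
Variables (R : realType) (l q : nat) (A : 'M[bool]_(l, q)).

Definition dotcol (t : 'rV[R]_l) (j : 'I_q) : R := \sum_i t 0 i * (A i j)%:R.

Lemma dotcol_shift (t : 'rV[R]_l) i j (h : R) :
  dotcol (h *: delta_mx 0 i + t) j = h * (A i j)%:R + dotcol t j.
Proof.
rewrite /dotcol (eq_bigr (fun k =>
    h * ((k == i)%:R * (A k j)%:R) + t 0 k * (A k j)%:R)).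
  rewrite big_split /= -mulr_sumr (bigD1 i) //= eqxx mul1r big1 ?addr0 //.
  by move=> k /negbTE->; rewrite mul0r.
by move=> k _; rewrite !mxE eqxx /= mulrDl mulrA.
Qed.

Lemma partial_sum_expR_dotcol (c : 'I_q -> R) (e : R) i (t : 'rV[R]_l) :
  partial i (fun t => \sum_j c j * expR (dotcol t j) + e) t =
  \sum_j (c j * (A i j)%:R) * expR (dotcol t j).
Proof.
(* [partial i] is the derivative at 0 of the restriction [g] to the line through [t]
   in direction [delta_mx 0 i]. *)
pose g h := \sum_j c j * expR (h * (A i j)%:R + dotcol t j) + e.
have g' : 'D_1 g 0 = \sum_j (c j * (A i j)%:R) * expR (dotcol t j).
  have gE : g = \sum_j (fun h => c j * expR (h * (A i j)%:R + dotcol t j)) + cst e.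
    by apply/funext => h; rewrite /g /= fct_sumE.
  rewrite gE; apply: derive_val; apply: is_derive_eq.
  rewrite addr0; apply: eq_bigr => j _.
  by rewrite mul0r add0r scaler0 add0r addr0 /GRing.scale /= mulr1; ring.
rewrite /partial /derive -g'; apply: congr1; apply: (congr1 (fmap ^~ _)).
apply/funext => h /=.
rewrite addr0 /GRing.scale /= mulr1 /g.
by congr (_ * (_ - _)); congr (_ + _); apply: eq_bigr => j _;
  rewrite ?dotcol_shift ?mul0r ?add0r.
Qed.

Lemma foldr_partial_sum_expR (lam : 'I_q -> R) (K : 'rV[R]_l -> R) (s : seq 'I_l) :
  (forall t, K t = \sum_j lam j * (expR (dotcol t j) - 1)) ->
  foldr (@partial R l) K s = fun t =>
    \sum_j (lam j * \prod_(i <- s) (A i j)%:R) * expR (dotcol t j) +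
    (if s is [::] then - \sum_j lam j else 0).
Proof.
move=> KE; elim: s => [|i s IH] /=.
  apply/funext => t; rewrite KE -sumrN -big_split /=; apply: eq_bigr => j _.
  by rewrite big_nil mulr1 mulrBr mulr1.
rewrite IH; apply/funext => t; rewrite partial_sum_expR_dotcol addr0.
by apply: eq_bigr => j _; rewrite big_cons [(A i j)%:R * _]mulrC !mulrA.
Qed.

Lemma prod_enum_ble (v : bvec l) j :
  \prod_(i <- enum [pred i | v i]) ((A i j)%:R : R) = (ble v (bcol A j))%:R.
Proof.
rewrite big_enum /=; case: (boolP (ble v _)) => [/forallP le_vA | ].
  by apply: big1 => i; rewrite inE => vi; move: (le_vA i); rewrite ffunE vi /= => ->.
rewrite negb_forall => /existsP[i]; rewrite ffunE negb_imply => /andP[vi /negbTE Aij].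
by rewrite (bigD1 i) ?inE //= Aij mul0r.
Qed.

Lemma phi_sum_expR (lam : 'I_q -> R) (K : 'rV[R]_l -> R) (v : bvec l) :
  (forall t, K t = \sum_j lam j * (expR (dotcol t j) - 1)) ->
  v != bzero l -> phi K v = \sum_j lam j * (ble v (bcol A j))%:R.
Proof.
move=> KE /bzeroPn[i vi]; rewrite /phi (foldr_partial_sum_expR _ KE).
case E: (enum [pred i | v i]) => [|i0 s].
  by move: (mem_enum [pred i | v i] i); rewrite E in_nil unfold_in /= vi.
rewrite /= addr0 -E; apply: eq_bigr => j _.
have dotcol0 : dotcol 0 j = 0 by rewrite /dotcol big1 // => k _; rewrite mxE mul0r.
by rewrite dotcol0 expR0 mulr1 prod_enum_ble.
Qed.

End MixedPartials.

Lemma sum_ord_mul_eqn (R : pzSemiRingType) (a : nat -> R) (x N : nat) :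
  \sum_(m < N.+1) a m * (x == m)%:R = if (x <= N)%N then a x else 0.
Proof.
case: ifPn => [le_xN | ]; last first.
  rewrite -ltnNge => lt_Nx; apply: big1 => m _.
  by rewrite eqn_leq leqNgt (leq_trans (ltn_ord m) lt_Nx) mulr0.
rewrite (bigD1 (Ordinal (le_xN : (x < N.+1)%N))) //= eqxx mulr1 big1 ?addr0 // => m.
by rewrite -val_eqE /= eq_sym => /negbTE->; rewrite mulr0.
Qed.

Lemma cvg_poisson_pgf (R : realType) (lam c : R) : 0 < lam ->
  (\sum_(m < N) c ^+ m * poisson_pmf lam m) @[N --> \oo] --> expR (lam * (c - 1)).
Proof.
move=> lam_gt0.
have -> : (fun N => \sum_(m < N) c ^+ m * poisson_pmf lam m) =
    (fun N => expR (- lam) * series (exp_coeff (c * lam)) N).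
  apply/funext => N; rewrite /series /= big_mkord mulr_sumr; apply: eq_bigr => m _.
  by rewrite /poisson_pmf lam_gt0 /exp_coeff /= exprMn; ring.
have -> : expR (lam * (c - 1)) = expR (- lam) * expR (c * lam).
  by rewrite -expRD; congr expR; ring.
by apply: cvgMr; exact: is_cvg_series_exp_coeff.
Qed.

Lemma cvg_big_prod (R : numFieldType) (I : Type) (s : seq I) (u : I -> nat -> R)
    (L : I -> R) :
  (forall j, u j n @[n --> \oo] --> L j) ->
  \prod_(j <- s) u j n @[n --> \oo] --> \prod_(j <- s) L j.
Proof.
move=> u_cvg; elim: s => [|j s IH].
  by rewrite big_nil; under eq_fun do rewrite big_nil; exact: cvg_cst.
by rewrite big_cons; under eq_fun do rewrite big_cons; exact: cvgM.
Qed.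

Section JointPoissonPgf.
Context d (T : measurableType d) (R : realType) (P : probability T R) (q : nat)
  (X : 'I_q -> {RV P >-> nat}) (lam : 'I_q -> R).
Hypotheses (lam_gt0 : forall j, 0 < lam j)
  (X_poisson : forall j, is_poisson (lam j) (X j)) (X_indep : mutually_independent X).

Definition level_set N (n : {ffun 'I_q -> 'I_N.+1}) : set T :=
  \bigcap_j (X j @^-1` [set (n j : nat)]).

Lemma measurable_level_set N n : measurable (@level_set N n).
Proof.
apply: fin_bigcap_measurable; first exact: finite_finset.
by move=> j _; apply: measurable_funPTI.
Qed.

Lemma prod_eqn_level_set N (n : {ffun 'I_q -> 'I_N.+1}) w :
  \prod_j ((X j w == n j)%:R : R) = \1_(level_set n) w.
Proof.
rewrite indicE; case: (pickP (fun j => X j w != n j)) => [j /= neq_j | eq_all].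
  rewrite (bigD1 j) //= (negbTE neq_j) mul0r.
  case: (boolP (w \in level_set n)) => //; rewrite inE => /(_ j I) /= eq_j.
  by rewrite eq_j eqxx in neq_j.
rewrite big1 => [|j _]; last by move/negbFE: (eq_all j) => ->.
suff -> : w \in level_set n by [].
by rewrite inE => j _ /=; move/negbFE/eqP: (eq_all j).
Qed.

Lemma probability_level_set N (n : {ffun 'I_q -> 'I_N.+1}) :
  P (level_set n) = (\prod_j poisson_pmf (lam j) (n j))%:E.
Proof.
rewrite /level_set (@X_indep (fun j => [set (n j : nat)])) // -prodEFin.
by apply: eq_bigr => j _; rewrite X_poisson.
Qed.

Lemma integral_trunc_pgf (c : 'I_q -> R) N : (forall j, 0 <= c j) ->
  (\int[P]_w (\prod_j \sum_(m < N.+1) c j ^+ m * (X j w == m)%:R)%:E =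
   (\prod_j \sum_(m < N.+1) c j ^+ m * poisson_pmf (lam j) m)%:E)%E.
Proof.
move=> c_ge0; have c_pow_ge0 n : 0 <= \prod_j c j ^+ n j.
  by apply: prodr_ge0 => j _; exact: exprn_ge0.
have expand w : \prod_j \sum_(m < N.+1) c j ^+ m * (X j w == m)%:R =
    \sum_(n : {ffun 'I_q -> 'I_N.+1}) (\prod_j c j ^+ n j) * \1_(level_set n) w.
  rewrite bigA_distr_bigA; apply: eq_bigr => n _.
  by rewrite big_split /= prod_eqn_level_set.
under eq_integral do rewrite expand -sumEFin.
rewrite ge0_integral_sum //; first last.
- by move=> n w _; rewrite lee_fin mulr_ge0 // indicE ler0n.
- move=> n; apply/measurable_EFinP; apply: measurable_funM => //.
  exact: measurable_indic (measurable_level_set n).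
rewrite bigA_distr_bigA -sumEFin; apply: eq_bigr => n _.
under eq_integral do rewrite EFinM.
rewrite ge0_integralZl ?lee_fin //; last first.
  exact/measurable_EFinP/measurable_indic/measurable_level_set.
rewrite integral_indic //; last exact: measurable_level_set.
rewrite [_ `&` _]setIT big_split EFinM; congr (_ * _)%E; exact: probability_level_set.
Qed.

Lemma cvg_prod_trunc_pgf (c : 'I_q -> R) :
  \prod_j \sum_(m < N.+1) c j ^+ m * poisson_pmf (lam j) m @[N --> \oo] -->
  \prod_j expR (lam j * (c j - 1)).
Proof.
apply: (cvg_big_prod
  (u := fun j N => \sum_(m < N.+1) c j ^+ m * poisson_pmf (lam j) m)).
by move=> j; have := cvg_poisson_pgf (c := c j) (lam_gt0 j); rewrite -cvg_shiftS.
Qed.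

Lemma expectation_prod_pow (c : 'I_q -> R) : (forall j, 0 <= c j) ->
  ('E_P[(fun w => \prod_j c j ^+ X j w)%R] = (\prod_j expR (lam j * (c j - 1)))%R%:E)%E.
Proof.
move=> c_ge0.
(* Monotone convergence along the truncations of the power series in each [c j]. *)
pose g N w := (\prod_j \sum_(m < N.+1) c j ^+ m * (X j w == m)%:R)%:E.
have g_lim w : (\prod_j c j ^+ X j w)%:E = limn (g^~ w).
  apply/esym/lim_near_cst => //; near=> N.
  have le_XN : (\max_j X j w <= N)%N by near: N; exact: nbhs_infty_ge.
  congr _%:E; apply: eq_bigr => j _.
  by rewrite sum_ord_mul_eqn (leq_trans (leq_bigmax j) le_XN).
have g_ge0 N w j : 0 <= \sum_(m < N.+1) c j ^+ m * (X j w == m)%:R :> R.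
  by apply: sumr_ge0 => m _; rewrite mulr_ge0 ?exprn_ge0.
rewrite unlock (eq_integral (fun w => limn (g^~ w))) => [|w _]; last exact: g_lim.
rewrite monotone_convergence //; first last.
- move=> w _ N M le_NM; rewrite lee_fin; apply: ler_prod => j _.
  rewrite g_ge0 !sum_ord_mul_eqn /=; case: ifP => [le_wN | _].
    by rewrite (leq_trans le_wN le_NM).
  by case: ifP => // _; exact: exprn_ge0.
- by move=> N w _; rewrite lee_fin; apply: prodr_ge0 => j _; exact: g_ge0.
- move=> N; apply/measurable_EFinP; apply: measurable_prod => j _.
  apply: measurable_sum => m.
  exact: (measurableT_comp (f := fun x : nat => c j ^+ m * (x == m)%:R)).
under eq_fun do rewrite integral_trunc_pgf //.
have trunc_cvg := cvg_prod_trunc_pgf (c := c).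
rewrite -[X in limn X]/(EFin \o _) EFin_lim; last exact: cvgP trunc_cvg.
by rewrite (cvg_lim _ trunc_cvg).
Unshelve. all: by end_near. Qed.

Lemma KYE l (A : 'M[bool]_(l, q)) (t : 'rV[R]_l) :
  KY A X t = \sum_j lam j * (expR (dotcol A t j) - 1).
Proof.
have exp_tY w :
    expR (\sum_i t 0 i * (Yvec A X i w)%:R) = \prod_j expR (dotcol A t j) ^+ X j w.
  under [RHS]eq_bigr do rewrite -expRM_natr.
  rewrite -expR_sum /Yvec /dotcol; congr expR.
  under eq_bigr do rewrite natr_sum mulr_sumr.
  rewrite exchange_big /=; apply: eq_bigr => j _; rewrite mulr_suml.
  by apply: eq_bigr => i _; rewrite natrM mulrA.
rewrite /KY (eq_fun exp_tY) expectation_prod_pow => [|j]; last exact: expR_ge0.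
by rewrite /= -expR_sum expRK.
Qed.

End JointPoissonPgf.

Section BreadthFirstSearch.
Variables (R : realType) (l : nat) (ph : bvec l -> R).
Local Notation state := (seq (bvec l) * seq (bvec l * R))%type.

Definition visit v (s : state) w : state :=
  if is_succ v w && (0 < ph w) && (w \notin map fst s.2)
  then (rcons s.1 w, rcons s.2 (w, ph w)) else s.

Lemma alg_step_cons v Q V :
  alg_step ph (v :: Q, V) = foldl (visit v) (Q, V) (enum (bvec l)).
Proof. by []. Qed.

Lemma foldl_visit v ws Q V :
  let r := foldl (visit v) (Q, V) ws in
  exists added, [/\ r.1 = Q ++ added, r.2 = V ++ [seq (w, ph w) | w <- added],
    uniq added,
    (forall w, w \in added -> [&& is_succ v w, 0 < ph w & w \notin map fst V])
    & (forall w, w \in ws -> is_succ v w -> 0 < ph w -> w \in map fst r.2)].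
Proof.
elim: ws Q V => [|w ws IH] Q V /=; first by exists [::]; split; rewrite ?cats0.
case new_w: (is_succ v w && (0 < ph w) && (w \notin map fst V)).
  have -> : visit v (Q, V) w = (rcons Q w, rcons V (w, ph w)).
    by rewrite /visit new_w.
  move/andP: new_w => [/andP[succ_w pos_w] notin_w].
  have [added [-> -> uniq_added added_new ws_seen]] :=
    IH (rcons Q w) (rcons V (w, ph w)).
  exists (w :: added); split; rewrite ?cat_rcons //.
  - rewrite /= uniq_added andbT; apply/negP => /added_new.
    by rewrite map_rcons mem_rcons mem_head !andbF.
  - move=> u; rewrite inE => /orP[/eqP -> | /added_new]; first by rewrite succ_w pos_w.
    by rewrite map_rcons mem_rcons inE negb_or => /and3P[-> -> /andP[]].
  - move=> u; rewrite inE => /orP[/eqP -> _ _ | /ws_seen]; last by rewrite cat_rcons.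
    by rewrite map_cat mem_cat /= inE eqxx orbT.
have -> : visit v (Q, V) w = (Q, V) by rewrite /visit new_w.
have [added [e1 e2 uniq_added added_new ws_seen]] := IH Q V.
exists added; split => // u; rewrite inE => /orP[/eqP -> succ_w pos_w | /ws_seen //].
move/negbT: new_w; rewrite succ_w pos_w negbK => seen_w.
by rewrite e2 map_cat mem_cat seen_w.
Qed.

(* [done] lists the vertices dequeued so far, starting with the root [0]; until
   the queue empties, each step dequeues exactly one vertex. *)
Definition bfs_inv n (st : state) := exists done : seq (bvec l),
  [/\ bzero l :: map fst st.2 = done ++ st.1, uniq (bzero l :: map fst st.2),
      (forall p, p \in st.2 -> p.2 = ph p.1 /\ 0 < ph p.1),
      (forall v w, v \in done -> is_succ v w -> 0 < ph w -> w \in map fst st.2)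
    & st.1 = [::] \/ size done = n].

Lemma alg_state_inv n : bfs_inv n (alg_state ph n).
Proof.
elim: n => [|n [done [eS uS Vph closed sz]]]; first by exists [::]; split => //; right.
rewrite [alg_state _ _.+1]/= -/(alg_state ph n).
case: (alg_state ph n) eS uS Vph closed sz => [[|v Q] V] /= eS uS Vph closed sz.
  by exists done; split => //; left.
rewrite /bfs_inv alg_step_cons.
have [added [-> -> uniq_added added_new ws_seen]] := foldl_visit v (enum (bvec l)) Q V.
have map_fst_added : map fst [seq (w, ph w) | w <- added] = added.
  by rewrite -map_comp map_id.
exists (rcons done v); split.
- by rewrite map_cat map_fst_added -cat_cons eS cat_rcons -catA.
- rewrite map_cat map_fst_added /= mem_cat negb_or cat_uniq uniq_added andbT.
  move/andP: uS => [-> ->] /=; apply/andP; split.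
    by apply/negP => /added_new /and3P[/and3P[]]; rewrite eqxx.
  by apply/hasPn => w /added_new /and3P[_ _].
- move=> p; rewrite mem_cat => /orP[/Vph // | /mapP[w /added_new /and3P[_ pos_w _] ->]].
  by [].
- move=> u w; rewrite mem_rcons inE => /orP[/eqP -> | /closed c] succ_w pos_w.
    exact: ws_seen (mem_enum _ w) succ_w pos_w.
  by rewrite map_cat mem_cat c.
- by right; case: sz => // <-; rewrite size_rcons.
Qed.

Lemma alg_state_uniq n : uniq (map fst (alg_state ph n).2).
Proof. by have [done [_ /andP[_ uS] _ _ _]] := alg_state_inv n. Qed.

Lemma alg_terminates : exists n, (alg_state ph n).1 = [::].
Proof.
exists #|bvec l|.+1; have [done [eS uS _ _ [//|sz]]] := alg_state_inv #|bvec l|.+1.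
have := max_card (mem (bzero l :: map fst (alg_state ph #|bvec l|.+1).2)).
rewrite (card_uniqP uS) eS size_cat sz ltnNge => /negP; case.
by rewrite leq_addr.
Qed.

Hypothesis ph_antitone : forall u w, u != bzero l -> ble u w -> ph w <= ph u.

Lemma alg_reaches n w : (alg_state ph n).1 = [::] -> w != bzero l -> 0 < ph w ->
  w \in map fst (alg_state ph n).2.
Proof.
move=> Q0; have [done [eS _ _ closed _]] := alg_state_inv n.
rewrite Q0 cats0 in eS.
elim: {w}(bweight w).+1 {-2}w (ltnSn (bweight w)) => // k IH w lt_wk w0 pos_w.
have /bzeroPn[i wi] := w0; have succ_w := bclear_succ wi.
apply: (closed (bclear w i)) => //; rewrite -eS.
have [-> | v0] := eqVneq (bclear w i) (bzero l); first exact: mem_head.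
have /andP[le_w _] : blt (bclear w i) w by case/and3P: succ_w.
rewrite in_cons IH ?orbT //; last exact: lt_le_trans pos_w (ph_antitone v0 le_w).
by rewrite -ltnS (leq_trans _ lt_wk) // ltnS blt_weight //; case/and3P: succ_w.
Qed.

Lemma alg_stateP n p : (alg_state ph n).1 = [::] ->
  p \in (alg_state ph n).2 <-> [/\ p.1 != bzero l, 0 < ph p.1 & p.2 = ph p.1].
Proof.
move=> Q0; have [done [_ /andP[S0 _] Vph _ _]] := alg_state_inv n.
split=> [pV | [p0 pos_p eq_p]].
  have [eq_p pos_p] := Vph p pV; split=> //.
  by apply: contraNneq S0 => <-; exact: map_f.
have /mapP[p' p'V eq_fst] := alg_reaches Q0 p0 pos_p.
have [eq_p' _] := Vph _ p'V.
suff -> : p = p' by [].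
by case: p p' eq_fst eq_p eq_p' {p'V p0 pos_p} => [? ?] [? ?] /= <- -> ->.
Qed.

End BreadthFirstSearch.

Lemma sum_nth_eq_uniq (T : eqType) (R : pzSemiRingType) (x0 x : T) (s : seq T)
    (G : T -> R) : uniq s -> x \in s ->
  \sum_(k < size s) (x == nth x0 s k)%:R * G (nth x0 s k) = G x.
Proof.
move=> us xs; have xk : (index x s < size s)%N by rewrite index_mem.
rewrite (bigD1 (Ordinal xk)) //= nth_index // eqxx mul1r big1 ?addr0 // => k nkx.
case: eqP => [ex|]; last by rewrite mul0r.
by move/eqP: nkx; case; apply: val_inj; rewrite /= ex index_uniq.
Qed.

Lemma MS_unitmx (R : realType) l (S : seq (bvec l)) : uniq S -> MS R S \in unitmx.
Proof.
move=> uS; rewrite unitmxE unitfE; apply/det0P => -[x /eqP x_neq0 xM0].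
apply: x_neq0; apply/matrixP => z m; rewrite (ord1 z) mxE.
(* Row [m] of [x *m MS S = 0] only involves [x m] and entries at indices of
   smaller weight, so [x] vanishes by strong induction on the weight. *)
elim: {m}(bweight _).+1 {-2}m (ltnSn (bweight (nth (bzero l) S m))) => // n IH m.
move=> lt_mn; have := congr1 (fun M : 'M[R]_(1, size S) => M 0 m) xM0.
rewrite !mxE (bigD1 m) //= mxE ble_refl mulr1 big1 ?addr0 // => k neq_km.
rewrite mxE; case le_km: (ble _ _); last by rewrite mulr0.
have neq_nth : nth (bzero l) S k != nth (bzero l) S m.
  by rewrite nth_uniq //; apply: contra neq_km => /eqP/val_inj/eqP.
rewrite (IH k) ?mul0r //.
by rewrite -ltnS (leq_trans _ lt_mn) // ltnS blt_weight // /blt le_km neq_nth.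
Qed.

Section ZetaInversion.
Variables (R : realType) (l q : nat) (A : 'M[bool]_(l, q)) (lam : 'I_q -> R).
Variable ph : bvec l -> R.
Hypotheses (lam_gt0 : forall j, 0 < lam j) (injA : injective (bcol A))
  (nzA : forall j, bcol A j != bzero l)
  (phE : forall v, v != bzero l -> ph v = \sum_j lam j * (ble v (bcol A j))%:R).

Lemma zeta_antitone u w : u != bzero l -> ble u w -> ph w <= ph u.
Proof.
move=> u0 le_uw; have w0 : w != bzero l.
  have /bzeroPn[i ui] := u0; apply/bzeroPn; exists i.
  by move/forallP: le_uw => /(_ i); rewrite ui.
rewrite !phE //; apply: ler_sum => j _; apply: ler_wpM2l; first exact: ltW.
by case le_wj: (ble w _); rewrite ?ler0n // (ble_trans le_uw le_wj).
Qed.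

Lemma zeta_col_gt0 j : 0 < ph (bcol A j).
Proof.
rewrite phE // (bigD1 j) //= ble_refl mulr1 ltr_pwDl //.
by apply: sumr_ge0 => k _; rewrite mulr_ge0 ?ler0n ?ltW.
Qed.

Definition rho (v : bvec l) : R :=
  match [pick j | bcol A j == v] with Some j => lam j | None => 0 end.

Lemma rhoE v : rho v = \sum_j lam j * (bcol A j == v)%:R.
Proof.
rewrite /rho; case: pickP => [j /eqP Aj | noA]; last first.
  by rewrite big1 // => j _; rewrite noA mulr0.
rewrite (bigD1 j) //= Aj eqxx mulr1 big1 ?addr0 // => k neq_kj.
by rewrite -Aj (inj_eq injA) (negbTE neq_kj) mulr0.
Qed.

Lemma rho_gt0 v : 0 < rho v <-> exists j, bcol A j = v.
Proof.
rewrite /rho; case: pickP => [j /eqP Aj | noA]; first by split=> // _; exists j.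
by rewrite ltxx; split=> // -[j Aj]; move: (noA j); rewrite Aj eqxx.
Qed.

Section RestrictedToVisited.
Variable V : seq (bvec l * R).
Local Notation S := (map fst V).
Hypotheses (uniq_S : uniq S) (V_ph : forall p, p \in V -> p.2 = ph p.1)
  (S_neq0 : forall w, w \in S -> w != bzero l) (col_S : forall j, bcol A j \in S).

Lemma MS_mul_rho :
  MS R S *m (\col_i rho (nth (bzero l) S i)) =
  \col_(i < size S) (nth (bzero l, 0) V i).2.
Proof.
apply/matrixP => i z; rewrite (ord1 z) !mxE.
have iV : (i < size V)%N by rewrite -(size_map fst).
have nth_S : nth (bzero l) S i = (nth (bzero l, 0) V i).1.
  by rewrite (nth_map (bzero l, 0)).
rewrite V_ph ?mem_nth // -nth_S phE; last by apply: S_neq0; rewrite mem_nth.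
under eq_bigr do rewrite !mxE rhoE mulr_sumr.
rewrite exchange_big /=; apply: eq_bigr => j _.
rewrite -(sum_nth_eq_uniq (bzero l) (fun y => lam j * (ble (nth (bzero l) S i) y)%:R)
  uniq_S (col_S j)).
by apply: eq_bigr => k _; ring.
Qed.

Lemma psi_vecE : psi_vec V = \col_i rho (nth (bzero l) S i).
Proof. by rewrite /psi_vec -MS_mul_rho mulKmx // MS_unitmx. Qed.

End RestrictedToVisited.
End ZetaInversion.

Theorem proposition6 (d : measure_display) (T : measurableType d)
  (R : realType) (P : probability T R) (l q : nat)
  (X : 'I_q -> {RV P >-> nat}) (lam : 'I_q -> R) (A : 'M[bool]_(l, q)) :
  (forall j, 0 < lam j) ->
  (forall j, is_poisson (lam j) (X j)) ->
  mutually_independent X ->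
  injective (bcol A) ->
  (forall j, bcol A j != bzero l) ->
  let ph := phi (KY A X) in
  let rho := fun v : bvec l =>
    match [pick j | bcol A j == v] with Some j => lam j | None => 0 end in
  (exists n, (alg_state ph n).1 = [::]) /\
  forall n, (alg_state ph n).1 = [::] ->
    let V := (alg_state ph n).2 in
    let S := map fst V in
    let psi := psi_vec V in
    (* (1) V = {(w, phi w) : w in B_0, phi w > 0} *)
    (forall p : bvec l * R,
        p \in V <-> [/\ p.1 != bzero l, 0 < ph p.1 & p.2 = ph p.1]) /\
    (* (2) hat A = A and psi = rho on A *)
    (forall v : bvec l,
        (exists i : 'I_(size S), nth (bzero l) S i = v /\ 0 < psi i 0) <->
        (exists j, bcol A j = v)) /\
    (forall (i : 'I_(size S)) (v : bvec l),
        nth (bzero l) S i = v -> (exists j, bcol A j = v) -> psi i 0 = rho v).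
Proof.
move=> lam_gt0 X_poisson X_indep injA nzA ph rho.
have phE v : v != bzero l -> ph v = \sum_j lam j * (ble v (bcol A j))%:R.
  by apply: phi_sum_expR => t; exact: KYE.
have ph_antitone := zeta_antitone lam_gt0 phE.
split=> [|n Q0 V S psi]; first exact: alg_terminates.
have VP p := alg_stateP ph_antitone p Q0.
have col_S j : bcol A j \in S.
  by apply: (alg_reaches ph_antitone Q0 (nzA j)); exact: zeta_col_gt0.
have psiE i : psi i 0 = rho (nth (bzero l) S i).
  rewrite /psi (psi_vecE injA phE (alg_state_uniq _ n)) ?mxE // => [p /VP[] // | w].
  by case/mapP => p /VP[] ? _ _ ->.
split=> //; split=> [v | i v <- _]; last exact: psiE.
split=> [[i [<-]] | [j Aj]]; first by rewrite psiE => /(rho_gt0 A lam_gt0).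
have vS : v \in S by rewrite -Aj.
have v_idx : (index v S < size S)%N by rewrite index_mem.
exists (Ordinal v_idx); rewrite /= nth_index //.
by split=> //; rewrite psiE nth_index //; apply/(rho_gt0 A lam_gt0); exists j.
Qed.
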